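(* Let $n\geq2$ and $1\le k\le n$. Let $\mathcal M_n^{k,k-1}$ (resp. $\mathcal M_n^{k,k+1}$) be the set of monotone permutations $\pi\in S_n$ with $\pi(1)=k$ and $\pi(2)=k-1$ (resp. $\pi(2)=k+1$). For $\pi\in\mathcal M_n^{k,k-1}$ (resp. $\pi\in\mathcal M_n^{k,k+1}$) define $\bar\pi\in S_{n-1}$ by $\bar\pi(1)=k-1$ (resp. $\bar\pi(1)=k$) and, for $i=2,\dots,n-1$, $\bar\pi(i)=\pi(i+1)$ if $\pi(i+1)<k$ and $\bar\pi(i)=\pi(i+1)-1$ if $\pi(i+1)>k$. Then $\pi\mapsto\bar\pi$ is a bijection $\mathcal M_n^{k,k-1}\to\mathcal M_{n-1}^{k-1}$ (resp. $\mathcal M_n^{k,k+1}\to\mathcal M_{n-1}^{k}$), and $(-1)^{\operatorname{dr}(\bar\pi)}=(-1)^{\operatorname{dr}(\pi)+k}$ (resp. $(-1)^{\operatorname{dr}(\bar\pi)}=(-1)^{\operatorname{dr}(\pi)+k-1}$).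
   Context: A permutation $\pi\in S_n$ is monotone if, for each $i=1,\dots,n$, either $\pi(j)<\pi(i)$ for all $j<i$, or $\pi(j)>\pi(i)$ for all $j<i$; in the second case $i$ is called a drop of $\pi$ (by convention $i=1$ satisfies the first condition vacuously and is not a drop). $\mathcal M_n^k$ denotes the set of monotone permutations with $\pi(1)=k$, and $\operatorname{dr}(\pi)$ the sum of all drops of $\pi$. *)

(* Permutations of {1..n} are represented by 'S_n = {perm 'I_n}
   (values 0..n-1); [pv p i] is the 1-based reading pi(i) in {1..n}. *)
From mathcomp Require Import all_boot all_order all_algebra all_fingroup.
Set Implicit Arguments. Unset Strict Implicit. Unset Printing Implicit Defensive.

(* 1-based value pi(i) for 1 <= i <= n (returns 0 outside that range). *)
Definition pv {n : nat} (p : 'S_n) (i : nat) : nat :=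
  match @insub nat (fun m => m < n) _ i.-1 with
  | Some j => (p j).+1
  | None => 0
  end.

Definition monotone {n : nat} (p : 'S_n) : bool :=
  [forall i in 'I_n.+1,
     (0 < i) ==>
     ([forall j in 'I_n.+1, ((0 < j) && (j < i)) ==> (pv p j < pv p i)]
      || [forall j in 'I_n.+1, ((0 < j) && (j < i)) ==> (pv p i < pv p j)])].

Definition is_drop {n : nat} (p : 'S_n) (i : nat) : bool :=
  (1 < i) && (i <= n) &&
  [forall j in 'I_n.+1, ((0 < j) && (j < i)) ==> (pv p i < pv p j)].

Definition dr {n : nat} (p : 'S_n) : nat :=
  \sum_(1 <= i < n.+1 | is_drop p i) i.

Definition Mset (n k : nat) : {set 'S_n} :=
  [set p : 'S_n | monotone p && (pv p 1 == k)].

Definition M2set (n k l : nat) : {set 'S_n} :=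
  [set p : 'S_n | monotone p && (pv p 1 == k) && (pv p 2 == l)].

Definition barval {n : nat} (k v : nat) (p : 'S_n) (i : nat) : nat :=
  if i == 1 then v
  else if pv p i.+1 < k then pv p i.+1 else (pv p i.+1).-1.

From mathcomp Require Import all_boot all_order all_algebra all_fingroup.
From mathcomp Require Import zify.
Set Implicit Arguments. Unset Strict Implicit. Unset Printing Implicit Defensive.
Import GRing.Theory.

(* Deleting the first entry of a permutation and standardising the rest
   ([behead_perm], with inverse [lift_perm ord0]) maps M_n^{k,l} bijectively
   onto M_{n-1}^{unbump k l} whenever k and l are adjacent values.  Indeed,
   for i >= 3 the value pi(i) lies on the same side of pi(1) = k as of
   pi(2) = l, so pi(i) is a left-to-right maximum (minimum) of pi exactly when
   bar(pi)(i-1) is one of bar(pi): monotonicity is preserved and the drops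
   i >= 3 of pi are the drops i-1 of bar(pi).  Hence
   dr(pi) = 2[l < k] + dr(bar pi) + #drops(bar pi), and in a monotone
   permutation the drops are exactly the positions carrying a value below the
   first one, so #drops(bar pi) = bar(pi)(1) - 1. *)

Definition left_max (P : nat -> nat) (i : nat) :=
  forall j, 0 < j < i -> P j < P i.
Definition left_min (P : nat -> nat) (i : nat) :=
  forall j, 0 < j < i -> P i < P j.

Lemma ltn_bump2 h i j : (bump h i < bump h j) = (i < j).
Proof. by rewrite !ltnNge leq_bump2. Qed.

Lemma pv_ord n (p : 'S_n) (j : 'I_n) : pv p j.+1 = (p j).+1.
Proof.
rewrite /pv /= (insubT (fun m => m < n) (ltn_ord j)) /=.
by congr (p _).+1; apply: val_inj.
Qed.

Lemma pv1 n (p : 'S_n.+1) : pv p 1 = (p ord0).+1.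
Proof. exact: (pv_ord p ord0). Qed.

Lemma pv_gt0 n (p : 'S_n) i : 0 < i <= n -> 0 < pv p i.
Proof.
by case: i => // i /andP[_ lt_in]; rewrite (pv_ord p (Ordinal lt_in)).
Qed.

Lemma forall_ltP n i (P : nat -> bool) : i <= n.+1 ->
  reflect (forall j, 0 < j < i -> P j)
    [forall j in 'I_n.+1, ((0 < j) && (j < i)) ==> P j].
Proof.
move=> le_in; apply: (iffP forallP) => [H j /andP[j_gt0 lt_ji] | H j].
  by have := H (Ordinal (leq_trans lt_ji le_in)); rewrite /= j_gt0 lt_ji.
by apply/implyP => _; apply/implyP => /H.
Qed.

Lemma monotoneP n (p : 'S_n) :
  reflect (forall i, 0 < i <= n -> left_max (pv p) i \/ left_min (pv p) i)
    (monotone p).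
Proof.
apply: (iffP forallP) => [H i /andP[i_gt0 le_in] | H i].
  have /(_ (Ordinal (le_in : i < n.+1))) := H; rewrite /= i_gt0 /=.
  case/orP => [/(forall_ltP (fun j => pv p j < pv p i) (leqW le_in)) |
               /(forall_ltP (fun j => pv p i < pv p j) (leqW le_in))];
    by [left | right].
apply/implyP => _; apply/implyP => i_gt0; have le_in : i <= n by rewrite -ltnS.
have := H i; rewrite i_gt0 => /(_ le_in) [max_i | min_i]; apply/orP.
  by left; apply/(forall_ltP (fun j => pv p j < pv p i) (leqW le_in)).
by right; apply/(forall_ltP (fun j => pv p i < pv p j) (leqW le_in)).
Qed.

Lemma is_dropP n (p : 'S_n) i :
  reflect (1 < i <= n /\ left_min (pv p) i) (is_drop p i).
Proof.
apply: (iffP andP) => [] [/andP[lt1i le_in]].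
  by move/(forall_ltP (fun j => pv p i < pv p j) (leqW le_in)); rewrite lt1i.
by rewrite lt1i => /(forall_ltP (fun j => pv p i < pv p j) (leqW le_in)).
Qed.

Lemma is_drop1 n (p : 'S_n) : is_drop p 1 = false.
Proof. by []. Qed.

Section BeheadPerm.
Variable n : nat.
Implicit Types (p : 'S_n.+1) (q : 'S_n).

(* The default [j] is never used since [p] is injective. *)
Definition behead_perm_fun p (j : 'I_n) : 'I_n :=
  odflt j (unlift (p ord0) (p (lift ord0 j))).

Lemma behead_perm_funE p j :
  p (lift ord0 j) = lift (p ord0) (behead_perm_fun p j).
Proof.
rewrite /behead_perm_fun; case: unliftP => [j' -> // | /perm_inj].
by move/eqP; rewrite eq_sym (negbTE (neq_lift _ _)).
Qed.

Lemma behead_perm_fun_inj p : injective (behead_perm_fun p).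
Proof.
move=> j1 j2 eq_j; apply: (@lift_inj _ ord0); apply: (@perm_inj _ p).
by rewrite !behead_perm_funE eq_j.
Qed.

Definition behead_perm p : 'S_n := perm (@behead_perm_fun_inj p).

Lemma behead_permE p j : p (lift ord0 j) = lift (p ord0) (behead_perm p j).
Proof. by rewrite permE behead_perm_funE. Qed.

Lemma behead_permK p : lift_perm ord0 (p ord0) (behead_perm p) = p.
Proof.
apply/permP => i; case: (unliftP ord0 i) => [j|] ->.
  by rewrite lift_perm_lift behead_permE.
by rewrite lift_perm_id.
Qed.

Lemma behead_lift_perm (a : 'I_n.+1) q : behead_perm (lift_perm ord0 a q) = q.
Proof.
apply/permP => j; apply: (@lift_inj _ a).
have := behead_permE (lift_perm ord0 a q) j.
by rewrite lift_perm_lift lift_perm_id.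
Qed.

Lemma pv_behead_perm p i : 0 < i < n.+1 ->
  pv p i.+1 = bump (pv p 1) (pv (behead_perm p) i).
Proof.
case: i => // i /andP[_]; rewrite ltnS => lt_in.
have := pv_ord p (lift ord0 (Ordinal lt_in)); rewrite lift0 /= => ->.
by rewrite behead_permE pv1 (pv_ord _ (Ordinal lt_in)) /= bumpS.
Qed.

End BeheadPerm.

Arguments behead_perm {n}.

Section RecordShift.
Variables (P Q : nat -> nat) (N : nat).
Hypothesis P_shift : forall i, 0 < i < N -> P i.+1 = bump (P 1) (Q i).
Hypothesis P12_adjacent : P 1 = (P 2).+1 \/ P 2 = (P 1).+1.

Lemma ltn_shift i j :
  0 < i < N -> 0 < j < N -> (P i.+1 < P j.+1) = (Q i < Q j).
Proof.
by move=> lt0iN lt0jN; rewrite (P_shift lt0iN) (P_shift lt0jN) ltn_bump2.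
Qed.

Lemma cmp_first_second i : 1 < i < N ->
  (P i.+1 < P 2 -> P i.+1 < P 1) /\ (P 2 < P i.+1 -> P 1 < P i.+1).
Proof.
move=> lt1iN; have := neq_bump (P 1) (Q i); rewrite -P_shift; last lia.
by move: P12_adjacent; lia.
Qed.

Lemma left_max_shift i : 1 < i < N -> left_max P i.+1 <-> left_max Q i.
Proof.
move=> lt1iN; split=> H j /andP[j_gt0 lt_ji].
  by rewrite -ltn_shift ?H; lia.
case: j j_gt0 lt_ji => [|[_ _ | j _ lt_ji]] //.
  by apply: (proj2 (cmp_first_second lt1iN)); rewrite ltn_shift ?H; lia.
by rewrite ltn_shift ?H; lia.
Qed.

Lemma left_min_shift i : 1 < i < N -> left_min P i.+1 <-> left_min Q i.
Proof.
move=> lt1iN; split=> H j /andP[j_gt0 lt_ji].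
  by rewrite -ltn_shift ?H; lia.
case: j j_gt0 lt_ji => [|[_ _ | j _ lt_ji]] //.
  by apply: (proj1 (cmp_first_second lt1iN)); rewrite ltn_shift ?H; lia.
by rewrite ltn_shift ?H; lia.
Qed.

Lemma records_shift :
  (forall i, 0 < i <= N -> left_max P i \/ left_min P i) <->
  (forall i, 0 < i < N -> left_max Q i \/ left_min Q i).
Proof.
split=> H [|[|i]] // /andP[_ lt_iN].
- by left=> j; lia.
- have [] := H i.+3; first lia.
  + by left; apply/left_max_shift => //; lia.
  + by right; apply/left_min_shift => //; lia.
- by left=> j; lia.
- case: i lt_iN => [_ | i lt_iN].
    by case: P12_adjacent => P12; [right | left] => j ?; have -> : j = 1; lia.
  have [] := H i.+2; first lia.
  + by left; apply/left_max_shift => //; lia.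
  + by right; apply/left_min_shift => //; lia.
Qed.

End RecordShift.

Section BeheadAdjacent.
Variables (n : nat) (p : 'S_n.+1).
Hypothesis p12_adjacent : pv p 1 = (pv p 2).+1 \/ pv p 2 = (pv p 1).+1.

Lemma monotone_behead_perm : monotone (behead_perm p) = monotone p.
Proof.
have [to_behead of_behead] :=
  records_shift (@pv_behead_perm n p) p12_adjacent.
by apply/monotoneP/monotoneP => [/of_behead | /to_behead].
Qed.

Lemma is_drop_behead_perm i : 1 < i <= n ->
  is_drop (behead_perm p) i = is_drop p i.+1.
Proof.
move=> lt1in; have lt1iN : 1 < i < n.+1 by lia.
have shift := left_min_shift (@pv_behead_perm n p) p12_adjacent lt1iN.
by apply/is_dropP/is_dropP => -[_ /shift min_i]; split=> //; lia.
Qed.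

End BeheadAdjacent.

Lemma monotone_drops_count n (q : 'S_n.+1) : monotone q ->
  \sum_(1 <= i < n.+2 | is_drop q i) 1 = (pv q 1).-1.
Proof.
move/monotoneP => mono_q.
have drop_lt1 i : 0 < i < n.+2 -> is_drop q i = (pv q i < pv q 1).
  case: i => [|[_ | i /andP[_ lt_in]]] //; first by rewrite ltnn.
  apply/is_dropP/idP => [[_ min_i] | lt_i1]; first by apply: min_i.
  split; first lia.
  by case: (mono_q i.+2) => [| max_i | //]; [lia | have := max_i 1; lia].
rewrite (congr_big_nat 1 n.+2 _ (fun=> 1) erefl erefl drop_lt1) // big_add1 /=.
rewrite big_mkord (eq_bigl (fun i => q i < q ord0)) => [|i]; last first.
  by rewrite pv_ord pv1.
rewrite pv1 -(reindex_inj (P := fun i : 'I_n.+1 => i < q ord0) (F := fun=> 1)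
                          (@perm_inj _ q)).
rewrite -(big_mkord (fun i => i < q ord0) (fun=> 1)).
rewrite -(big_nat_widen 0 _ _ xpredT) ?sum_nat_const_nat ?muln1 ?subn0 //.
exact: ltnW.
Qed.

Lemma dr_behead_perm n (p : 'S_n.+2) :
    pv p 1 = (pv p 2).+1 \/ pv p 2 = (pv p 1).+1 ->
  dr p = (is_drop p 2).*2 + dr (behead_perm p)
         + \sum_(1 <= i < n.+2 | is_drop (behead_perm p) i) 1.
Proof.
move=> p12_adjacent; set q := behead_perm p.
have drops_shift : \sum_(3 <= i < n.+3 | is_drop p i) i
                   = \sum_(2 <= i < n.+2 | is_drop q i) i.+1.
  rewrite big_add1 /=; apply: congr_big_nat => // i /andP[lt1i lt_in].
  by rewrite is_drop_behead_perm //; lia.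
rewrite /dr big_ltn_cond // is_drop1 big_ltn_cond // drops_shift.
rewrite [\sum_(1 <= i < _ | _) i]big_ltn_cond //.
rewrite [\sum_(1 <= i < _ | _) 1]big_ltn_cond //.
rewrite is_drop1 -addnA -big_split.
by rewrite (eq_bigr _ (fun i _ => addn1 i)); case: is_drop.
Qed.

Section AdjacentStart.
Variables (n k l : nat).
Hypothesis kl_adjacent : k = l.+1 \/ l = k.+1.
Implicit Type p : 'S_n.+2.

Lemma M2setP p :
  reflect [/\ monotone p, pv p 1 = k & pv p 2 = l] (p \in M2set n.+2 k l).
Proof. by rewrite inE -andbA; apply: (iffP and3P) => -[? /eqP ? /eqP ?]. Qed.

Lemma pv1_behead_perm p :
  p \in M2set n.+2 k l -> pv (behead_perm p) 1 = unbump k l.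
Proof. by case/M2setP=> _ <- <-; rewrite (@pv_behead_perm _ p 1) // bumpK. Qed.

Lemma behead_perm_in_Mset p :
  p \in M2set n.+2 k l -> behead_perm p \in Mset n.+1 (unbump k l).
Proof.
move=> pM; have /M2setP[mono_p p1 p2] := pM.
rewrite inE pv1_behead_perm // eqxx andbT monotone_behead_perm //.
by rewrite p1 p2.
Qed.

Lemma behead_perm_M2set_inj :
  {in M2set n.+2 k l &, injective behead_perm}.
Proof.
move=> p1 p2 /M2setP[_ p1_1 _] /M2setP[_ p2_1 _] eq_behead.
rewrite -(behead_permK p1) -(behead_permK p2) eq_behead; congr lift_perm.
by apply: val_inj; apply: succn_inj; rewrite -!pv1 p1_1 p2_1.
Qed.

Lemma imset_behead_perm_M2set :
  behead_perm @: M2set n.+2 k l = Mset n.+1 (unbump k l).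
Proof.
apply/setP => q; apply/imsetP/idP => [[p pM ->] | ].
  exact: behead_perm_in_Mset.
rewrite inE => /andP[mono_q /eqP q1].
have lt_k1 : k.-1 < n.+2.
  by move: q1; rewrite pv1 /unbump; have := ltn_ord (q ord0); lia.
pose p := lift_perm ord0 (Ordinal lt_k1) q.
have q_eq : behead_perm p = q by exact: behead_lift_perm.
have p1 : pv p 1 = k.
  by rewrite pv1 lift_perm_id /=; move: q1; rewrite pv1 /unbump; lia.
have p2 : pv p 2 = l.
  rewrite (@pv_behead_perm _ p 1) // q_eq q1 p1 unbumpK //; apply/eqP; lia.
exists p => //; apply/M2setP; split=> //.
by rewrite -monotone_behead_perm ?q_eq // p1 p2.
Qed.

Lemma pv_behead_perm_barval p i :
    p \in M2set n.+2 k l -> 0 < i <= n.+1 ->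
  pv (behead_perm p) i = barval k (unbump k l) p i.
Proof.
move=> pM /andP[i_gt0 le_in]; rewrite /barval; case: eqP => [-> | _].
  exact: pv1_behead_perm.
have /M2setP[_ p1 _] := pM.
rewrite (@pv_behead_perm _ p i) ?i_gt0 // p1 /bump.
by case: leqP => le_k; rewrite ?add0n ?add1n; case: ltnP; lia.
Qed.

Lemma sign_dr_behead_perm p : p \in M2set n.+2 k l ->
  ((-1) ^+ dr (behead_perm p) : int)%R
  = ((-1) ^+ (dr p + (unbump k l).-1))%R.
Proof.
move=> pM; have /M2setP[mono_p p1 p2] := pM.
have p12_adjacent : pv p 1 = (pv p 2).+1 \/ pv p 2 = (pv p 1).+1.
  by rewrite p1 p2.
have mono_q : monotone (behead_perm p) by rewrite monotone_behead_perm.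
rewrite (dr_behead_perm p12_adjacent) (monotone_drops_count mono_q).
rewrite pv1_behead_perm // -signr_odd -[RHS]signr_odd.
by congr (_ ^+ nat_of_bool _)%R; lia.
Qed.

End AdjacentStart.

Theorem lemma2p6 (n k : nat) (hn : 2 <= n) (hk1 : 1 <= k) (hkn : k <= n) :
  (* case pi(2) = k - 1 *)
  (exists f : 'S_n -> 'S_n.-1,
     (forall p, p \in M2set n k k.-1 ->
        forall i, 1 <= i <= n.-1 -> pv (f p) i = barval k k.-1 p i)
     /\ {in M2set n k k.-1 &, injective f}
     /\ f @: M2set n k k.-1 = Mset n.-1 k.-1
     /\ (forall p, p \in M2set n k k.-1 ->
          ((-1) ^+ dr (f p) : int)%R = ((-1) ^+ (dr p + k))%R))
  /\
  (* case pi(2) = k + 1 *)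
  (exists f : 'S_n -> 'S_n.-1,
     (forall p, p \in M2set n k k.+1 ->
        forall i, 1 <= i <= n.-1 -> pv (f p) i = barval k k p i)
     /\ {in M2set n k k.+1 &, injective f}
     /\ f @: M2set n k k.+1 = Mset n.-1 k
     /\ (forall p, p \in M2set n k k.+1 ->
          ((-1) ^+ dr (f p) : int)%R = ((-1) ^+ (dr p + k.-1))%R)).
Proof.
case: n hn hkn => [|[|n]] // _ _.
split; exists behead_perm.
- have kl_adjacent : k = k.-1.+1 \/ k.-1 = k.+1 by left; lia.
  have unbump_pred : unbump k k.-1 = k.-1.
    by rewrite /unbump ltnNge leq_pred subn0.
  split; last split; last split.
  + move=> p pM i i_range.
    by rewrite (pv_behead_perm_barval kl_adjacent) // unbump_pred.
  + exact: behead_perm_M2set_inj.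
  + by rewrite (imset_behead_perm_M2set n kl_adjacent) unbump_pred.
  + move=> p pM; have /M2setP[_ _ p2] := pM.
    have k_gt1 : 1 < k by have := @pv_gt0 _ p 2 isT; rewrite p2; lia.
    rewrite (sign_dr_behead_perm kl_adjacent) // unbump_pred.
    by rewrite -signr_odd -[RHS]signr_odd; congr (_ ^+ nat_of_bool _)%R; lia.
- have kl_adjacent : k = k.+1.+1 \/ k.+1 = k.+1 by right.
  have unbump_succ : unbump k k.+1 = k by rewrite /unbump ltnSn subn1.
  split; last split; last split.
  + move=> p pM i i_range.
    by rewrite (pv_behead_perm_barval kl_adjacent) // unbump_succ.
  + exact: behead_perm_M2set_inj.
  + by rewrite (imset_behead_perm_M2set n kl_adjacent) unbump_succ.
  + by move=> p pM; rewrite (sign_dr_behead_perm kl_adjacent) // unbump_succ.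
Qed.
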